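(* For all integers $m,n\ge1$, $$S_{m,n}(q)=\sum_{r=0}^{\lfloor m/2\rfloor}(-1)^r\left[\binom{m-1}{r}-\binom{m-1}{r-2}\right]\frac{(1-q^{(\frac{m+1}{2}-r)n})(1+(-1)^mq^{(\frac{m+1}{2}-r)(n+1)})q^{rn}}{(1-q^2)(1-q)^{m-1}(1-q^{\frac{m+1}{2}-r})}.$$
   Context: $q$ is an indeterminate and $q^{1/2}$ a fixed formal square root of $q$; identities are identities of rational functions in $q^{1/2}$. For integers $m,n\ge1$, $$S_{m,n}(q)=\sum_{k=1}^{n}\frac{1-q^{2k}}{1-q^2}\left(\frac{1-q^k}{1-q}\right)^{m-1}q^{\frac{m+1}{2}(n-k)}.$$ Binomial coefficients $\binom{a}{b}$ with integers $a,b$ are taken to be $0$ when $b<0$ or when $0\le a<b$. *)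

From mathcomp Require Import all_boot all_order all_algebra fraction.
Set Implicit Arguments. Unset Strict Implicit. Unset Printing Implicit Defensive.
Import GRing.Theory.
Local Open Scope ring_scope.

Definition RF : fieldType := {fraction {poly rat}}.
(* t stands for q^{1/2}; so q^{a/2} is written t ^+ a. *)
Definition t : RF := @FracField.tofrac {poly rat} 'X.

(* S_{m,n}(q) = sum_{k=1}^n (1-q^{2k})/(1-q^2) ((1-q^k)/(1-q))^{m-1} q^{(m+1)(n-k)/2} *)
Definition Smn (m n : nat) : RF :=
  \sum_(1 <= k < n.+1)
     ((1 - t ^+ (4 * k)) / (1 - t ^+ 4)) *
     ((1 - t ^+ (2 * k)) / (1 - t ^+ 2)) ^+ (m - 1) *
     t ^+ ((m + 1) * (n - k)).

Definition binz (a : nat) (b : int) : RF :=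
  match b with Posz b' => ('C(a, b'))%:R | Negz _ => 0 end.

(* right-hand side; (m+1)/2 - r = (m+1-2r)/2, so q^{((m+1)/2 - r) x} = t^{(m+1-2r) x} *)
Definition RHSmn (m n : nat) : RF :=
  \sum_(0 <= r < (m./2).+1)
    (-1) ^+ r * (binz (m - 1) r%:Z - binz (m - 1) (r%:Z - 2)) *
    ((1 - t ^+ ((m + 1 - 2 * r) * n)) *
     (1 + (-1) ^+ m * t ^+ ((m + 1 - 2 * r) * (n + 1))) *
     t ^+ (2 * (r * n)))
    / ((1 - t ^+ 4) * (1 - t ^+ 2) ^+ (m - 1) * (1 - t ^+ (m + 1 - 2 * r))).

From mathcomp Require Import all_boot all_order all_algebra fraction.
From mathcomp Require Import ring zify.

(* With y = q^k, the k-th summand of S_{m,n} is (1 - y^2)(1 - y)^{m-1} q^{(m+1)(n-k)/2}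
   divided by (1 - q^2)(1 - q)^{m-1}.  The coefficients c_j = C(m-1,j) - C(m-1,j-2) of
   (1 - y^2)(1 - y)^{m-1} are antisymmetric, c_{m+1-j} = -c_j, so this polynomial folds into
   sum_{r <= m/2} (-1)^r c_r (y^r + (-1)^m y^{m+1-r}).  Exchanging the sums over k and r
   leaves, for each r, two geometric sums in k whose closed forms combine into the r-th term
   of the right-hand side.  Everything is proved at an arbitrary nonzero x that is not a root
   of unity, then specialised to x = t. *)

Set Implicit Arguments. Unset Strict Implicit. Unset Printing Implicit Defensive.
Import GRing.Theory.
Local Open Scope ring_scope.

Definition bindiff (R : comPzRingType) (n j : nat) : R :=
  'C(n, j)%:R - (if (2 <= j)%N then 'C(n, j - 2)%:R else 0).

Lemma bindiff_sub (R : comPzRingType) n j :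
  (j <= n.+2)%N -> bindiff R n (n.+2 - j) = - bindiff R n j.
Proof.
move=> le_j; rewrite /bindiff.
case: (leqP 2 j) => j2; case: (leqP j n) => jn.
- rewrite ifT; last by lia.
  rewrite (_ : (n.+2 - j = n - (j - 2))%N); last by lia.
  rewrite bin_sub; last by lia.
  rewrite (_ : (n - (j - 2) - 2 = n - j)%N); last by lia.
  rewrite bin_sub //; ring.
- rewrite ifF; last by lia.
  rewrite (_ : (n.+2 - j = n - (j - 2))%N); last by lia.
  rewrite bin_sub; last by lia.
  rewrite (bin_small jn); ring.
- rewrite ifT; last by lia.
  rewrite (_ : (n.+2 - j - 2 = n - j)%N); last by lia.
  rewrite bin_sub // bin_small; last by lia.
  ring.
- rewrite ifF; last by lia.
  by rewrite !bin_small ?subrr ?oppr0 //; lia.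
Qed.

Lemma bindiff_mid (R : comPzRingType) p : bindiff R p.*2 p.+1 = 0.
Proof.
rewrite /bindiff; case: p => [|p]; first by rewrite bin_small // subrr.
rewrite (_ : (2 <= p.+2)%N = true) // (_ : (p.+2 = p.+1.*2 - (p.+2 - 2))%N); last by lia.
rewrite bin_sub; last by lia.
by rewrite (_ : (p.+1.*2 - (p.+2 - 2) - 2 = p.+2 - 2)%N) ?subrr //; lia.
Qed.

Lemma bindiff_genE (R : comPzRingType) (y : R) n :
  (1 - y ^+ 2) * (1 - y) ^+ n =
  \sum_(0 <= j < n.+3) (-1) ^+ j * bindiff R n j * y ^+ j.
Proof.
have binE k : (1 - y) ^+ k = \sum_(0 <= j < k.+1) (-1) ^+ j * 'C(k, j)%:R * y ^+ j.
  rewrite exprBn big_mkord; apply: eq_bigr => i _.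
  by rewrite expr1n mulr1 -mulr_natr; ring.
have tail : \sum_(n.+1 <= j < n.+3) (-1) ^+ j * 'C(n, j)%:R * y ^+ j = 0 :> R.
  by rewrite big_nat big1 // => j /andP[lt_nj _]; rewrite bin_small // mulr0 mul0r.
have head : \sum_(0 <= j < 2)
    (-1) ^+ j * (if (2 <= j)%N then 'C(n, j - 2)%:R else 0) * y ^+ j = 0 :> R.
  by rewrite big_nat big1 // => j /andP[_ lt_j2]; rewrite ifF ?mulr0 ?mul0r //; lia.
rewrite (eq_bigr (fun j => (-1) ^+ j * 'C(n, j)%:R * y ^+ j -
   (-1) ^+ j * (if (2 <= j)%N then 'C(n, j - 2)%:R else 0) * y ^+ j)); last first.
  by move=> j _; rewrite /bindiff; ring.
rewrite sumrB mulrBl mul1r binE; congr (_ - _).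
  by rewrite [RHS](big_cat_nat (leq0n n.+1) (leqW (leqnSn n.+1))) /= tail addr0.
rewrite [RHS](big_cat_nat (leq0n 2) (isT : (2 <= n.+3)%N)) /= head add0r.
rewrite (big_addn 0 _ 2) big_distrr /=.
apply: eq_big_nat => j _; rewrite ifT; last by lia.
by rewrite addnK !exprD; ring.
Qed.

Lemma big_nat_fold (V : nmodType) (F : nat -> V) N :
  \sum_(0 <= j < N.+1) F j =
  \sum_(0 <= r < N.+1./2) (F r + F (N - r)%N) + (if odd N then 0 else F N./2).
Proof.
set h := N.+1./2.
have le_hN : (h <= N.+1)%N by rewrite /h -divn2 leq_div.
have reflect_half : \sum_(h <= j < N.+1) F j = \sum_(0 <= r < N.+1 - h) F (N - r)%N.
  rewrite big_nat_rev (big_addn 0 _ h); apply: eq_big_nat => r /andP[_ lt_r].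
  by congr F; lia.
have size_half : (N.+1 - h = h + ~~ odd N)%N.
  by have := odd_double_half N.+1; rewrite /h /= -addnn; case: (odd N) => /=; lia.
rewrite (big_cat_nat (leq0n h) le_hN) /= reflect_half size_half.
rewrite (big_cat_nat (leq0n h) (leq_addr _ h)) /= big_split /= -addrA.
congr (_ + _); case oddN: (odd N); rewrite /= ?addn0 ?addn1.
  by rewrite (big_geq (leqnn h)) addr0.
rewrite big_nat1; congr (_ + F _).
by have := odd_double_half N; rewrite /h /= oddN /= add0n => {1}<-; lia.
Qed.

Lemma signr_subn (R : pzRingType) N r :
  (r <= N)%N -> (-1) ^+ (N - r) = (-1) ^+ N * (-1) ^+ r :> R.
Proof. by move=> le_rN; rewrite -{2}(subnK le_rN) exprD -mulrA -expr2 sqrr_sign mulr1. Qed.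

Lemma bindiff_gen_fold (R : comPzRingType) (y : R) m : (0 < m)%N ->
  (1 - y ^+ 2) * (1 - y) ^+ (m - 1) =
  \sum_(0 <= r < (m./2).+1)
     (-1) ^+ r * bindiff R (m - 1) r * (y ^+ r + (-1) ^+ m * y ^+ (m.+1 - r)).
Proof.
case: m => [//|n] _; rewrite subn1 /= bindiff_genE big_nat_fold.
have -> : (if odd n.+2 then 0 else (-1) ^+ n.+2./2 * bindiff R n n.+2./2 * y ^+ n.+2./2) = 0.
  rewrite /= negbK; case: ifP => [//|evn].
  by rewrite -[in bindiff _ _ _](odd_double_half n) evn add0n doubleK bindiff_mid mulr0 mul0r.
rewrite addr0; apply: eq_big_nat => r /andP[_ lt_r].
have le_r : (r <= n.+2)%N by rewrite -ltnS (leq_trans lt_r) // -divn2 leq_div.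
rewrite bindiff_sub // signr_subn // exprS; ring.
Qed.

Lemma subr_mul_geom_sum (R : comPzRingType) (a b : R) n :
  (a - b) * \sum_(1 <= k < n.+1) a ^+ k * b ^+ (n - k) = a * (a ^+ n - b ^+ n).
Proof.
elim: n => [|n IHn]; first by rewrite big_geq // mulr0 subrr mulr0.
rewrite big_nat_recr //= subnn mulr1.
have -> : \sum_(1 <= k < n.+1) a ^+ k * b ^+ (n.+1 - k) =
          b * \sum_(1 <= k < n.+1) a ^+ k * b ^+ (n - k).
  rewrite big_distrr; apply: eq_big_nat => k /andP[_ le_kn].
  by rewrite subSn // exprS mulrCA.
by rewrite mulrDr mulrCA IHn !exprS; ring.
Qed.

Lemma geom_sum_pair (F : fieldType) (u w s : F) n : u != 0 -> w != 0 -> w != 1 ->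
  \sum_(1 <= k < n.+1) (u ^+ k + s * (u * w * w) ^+ k) * (u * w) ^+ (n - k) =
  u ^+ n * (1 - w ^+ n) * (1 + s * w ^+ (n + 1)) / (1 - w).
Proof.
move=> u0 w0 w1.
have w1' : 1 - w != 0 by rewrite subr_eq0 eq_sym.
have uB : u - u * w != 0 by rewrite -{1}(mulr1 u) -mulrBr mulf_neq0.
have uwB : u * w * w - u * w != 0.
  by rewrite -{2}(mulr1 (u * w)) -mulrBr !mulf_neq0 // subr_eq0.
rewrite (eq_bigr (fun k => u ^+ k * (u * w) ^+ (n - k) +
   s * ((u * w * w) ^+ k * (u * w) ^+ (n - k)))); last by move=> k _; ring.
rewrite big_split /= -big_distrr /=.
rewrite -[X in X + _](mulKf uB) (@subr_mul_geom_sum F u (u * w) n).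
rewrite -[X in _ + s * X = _](mulKf uwB) (@subr_mul_geom_sum F (u * w * w) (u * w) n).
rewrite !exprMn addn1 exprS; field.
by rewrite w1' uB uwB.
Qed.

Section ClosedForm.

Variables (F : fieldType) (x : F).
Hypotheses (x_neq0 : x != 0) (x_expr_neq1 : forall d, (0 < d)%N -> x ^+ d != 1).

Definition Smn_at (m n : nat) : F :=
  \sum_(1 <= k < n.+1)
     ((1 - x ^+ (4 * k)) / (1 - x ^+ 4)) *
     ((1 - x ^+ (2 * k)) / (1 - x ^+ 2)) ^+ (m - 1) *
     x ^+ ((m + 1) * (n - k)).

Definition RHSmn_at (m n : nat) : F :=
  \sum_(0 <= r < (m./2).+1)
    (-1) ^+ r * bindiff F (m - 1) r *
    ((1 - x ^+ ((m + 1 - 2 * r) * n)) *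
     (1 + (-1) ^+ m * x ^+ ((m + 1 - 2 * r) * (n + 1))) *
     x ^+ (2 * (r * n)))
    / ((1 - x ^+ 4) * (1 - x ^+ 2) ^+ (m - 1) * (1 - x ^+ (m + 1 - 2 * r))).

Lemma subr_expr_neq0 d : (0 < d)%N -> 1 - x ^+ d != 0.
Proof. by move=> d_gt0; rewrite subr_eq0 eq_sym x_expr_neq1. Qed.

Lemma Smn_at_expand m n : Smn_at m n =
  ((1 - x ^+ 4) * (1 - x ^+ 2) ^+ (m - 1))^-1 *
  \sum_(1 <= k < n.+1) (1 - ((x ^+ 2) ^+ k) ^+ 2) * (1 - (x ^+ 2) ^+ k) ^+ (m - 1) *
     (x ^+ (m + 1)) ^+ (n - k).
Proof.
rewrite big_distrr; apply: eq_big_nat => k _ /=.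
rewrite (_ : (4 * k = 2 * k * 2)%N); last by lia.
rewrite !exprM expr_div_n; field.
by rewrite subr_expr_neq0 // expf_neq0 // subr_expr_neq0.
Qed.

Lemma Smn_at_term m n r : (2 * r <= m)%N ->
  \sum_(1 <= k < n.+1) (((x ^+ 2) ^+ k) ^+ r + (-1) ^+ m * ((x ^+ 2) ^+ k) ^+ (m.+1 - r)) *
     (x ^+ (m + 1)) ^+ (n - k) =
  (1 - x ^+ ((m + 1 - 2 * r) * n)) *
  (1 + (-1) ^+ m * x ^+ ((m + 1 - 2 * r) * (n + 1))) * x ^+ (2 * (r * n))
  / (1 - x ^+ (m + 1 - 2 * r)).
Proof.
move=> le_2r_m; set d := (m + 1 - 2 * r)%N.
have d_gt0 : (0 < d)%N by rewrite /d; lia.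
have expr_split e : ((x ^+ 2) ^+ e) = x ^+ (2 * e) by rewrite exprM.
have x_m1 : x ^+ (m + 1) = x ^+ (2 * r) * x ^+ d.
  by rewrite -exprD /d; congr (_ ^+ _); lia.
have x_m1r : x ^+ (2 * (m.+1 - r)) = x ^+ (2 * r) * x ^+ d * x ^+ d.
  by rewrite -!exprD /d; congr (_ ^+ _); lia.
under eq_bigr do rewrite !(exprAC (x ^+ 2) _ r) !(exprAC (x ^+ 2) _ (m.+1 - r)).
rewrite !expr_split x_m1r x_m1 geom_sum_pair ?expf_neq0 ?x_expr_neq1 //.
rewrite mulnA (exprM x (2 * r) n) (exprM x d n) (exprM x d (n + 1)).
field; exact: subr_expr_neq0.
Qed.

Lemma Smn_at_closed_form m n : (0 < m)%N -> Smn_at m n = RHSmn_at m n.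
Proof.
move=> m_gt0; rewrite Smn_at_expand /RHSmn_at.
under eq_bigr do rewrite (bindiff_gen_fold _ m_gt0) big_distrl.
rewrite exchange_big_nat big_distrr; apply: eq_big_nat => r /andP[_ lt_r] /=.
have le_2r_m : (2 * r <= m)%N by rewrite mul2n -geq_half_double -ltnS.
under eq_bigr do rewrite -!mulrA.
rewrite -!big_distrr /= Smn_at_term //.
field; rewrite expf_neq0 !subr_expr_neq0 //; lia.
Qed.

End ClosedForm.

Lemma t_neq0 : t != 0.
Proof. by rewrite /t tofrac_eq0 polyX_eq0. Qed.

Lemma t_expr_neq1 d : (0 < d)%N -> t ^+ d != 1.
Proof.
move=> d_gt0; rewrite /t -tofracXn -tofrac1 tofrac_eq.
apply/eqP => /(congr1 (fun p : {poly rat} => size p)).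
by rewrite size_polyXn size_poly1 => -[d0]; rewrite d0 in d_gt0.
Qed.

Lemma binz_subE (a r : nat) : binz a r - binz a (r%:Z - 2) = bindiff RF a r.
Proof. by rewrite /bindiff; case: r => [|[|r]]. Qed.

Theorem lemma2p1 (m n : nat) : (1 <= m)%N -> (1 <= n)%N -> Smn m n = RHSmn m n.
Proof.
move=> m_gt0 _.
have -> : RHSmn m n = RHSmn_at t m n.
  by apply: eq_bigr => r _; rewrite binz_subE.
exact: (Smn_at_closed_form t_neq0 t_expr_neq1).
Qed.
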